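(* Let $p$ be an odd prime, let $v$ be an integer with $1<v<p-1$, let $g\in\{2,\dots,p-1\}$ be a primitive root modulo $p$ with $\gcd(g,v)=1$, let $t\ge1$ and $b\in\{0,\dots,v-1\}$. Let $$\rho(b,t)=\#\{i\in[1,p-1]:\ g^i\,\%\,p\not\equiv b,\ g^{i+t+1}\,\%\,p\not\equiv b,\ g^{i+j}\,\%\,p\equiv b\ (1\le j\le t)\},$$ all congruences modulo $v$. Write $p=q\,g^{t+1}+r$ with $0\le r<g^{t+1}$. Then $$\left\lfloor\frac{g}{v}\right\rfloor^{t-1}\left\lfloor\frac{(v-1)g}{v}\right\rfloor^2\left\lfloor\frac{q}{v}\right\rfloor\ \le\ \rho(b,t)\ \le\ \left\lceil\frac{g}{v}\right\rceil^{t-1}\left\lceil\frac{(v-1)g}{v}\right\rceil^2\left\lceil\frac{q+1}{v}\right\rceil.$$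
   Context: $x\,\%\,p$ denotes the least nonnegative remainder of the integer $x$ modulo $p$. *)

From mathcomp Require Import all_boot.

Definition primitive_root_mod (p g : nat) : Prop :=
  coprime g p /\ forall k, 0 < k < p.-1 -> g ^ k %% p != 1.

Definition rho (p g v b t : nat) : nat :=
  #|[set i : 'I_p | (0 < i)
      && ((g ^ i %% p) %% v != b)
      && ((g ^ (i + t + 1) %% p) %% v != b)
      && [forall j : 'I_t.+1, (0 < j) ==> ((g ^ (i + j) %% p) %% v == b)]]|.

Definition ceil_div (a d : nat) : nat := (a + d.-1) %/ d.

From mathcomp Require Import all_boot zify.

Set Implicit Arguments.
Unset Strict Implicit.
Unset Printing Implicit Defensive.

(* Write x = g^i mod p; as g is a primitive root, i |-> x permutes [1, p-1] and the
   points g^(i+j) mod p are the orbit g^j x mod p.  With d_j the j-th base-g digit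
   of x/p we have g (g^j x mod p) = p d_j + (g^(j+1) x mod p), so when one orbit
   point lies in the class b mod v, its successor does iff g b ≡ b + p d_j (mod v),
   and conversely since g is invertible mod v.  Hence the condition defining
   rho(b,t) says that g x ≡ b + p d_0 (mod v) and that the digits d_0 ... d_t,
   i.e. the base-g digits of D = floor(g^(t+1) x / p), fail this test at both ends
   and pass it strictly inside.  The x sharing the same D form an interval of
   length q or q+1, containing between floor(q/v) and ceil((q+1)/v) solutions of
   the congruence on x.  The admissible D are counted digitwise as A^2 B^(t-1),
   where B counts the d < g with p d ≡ (g-1) b (mod v), so that
   floor(g/v) <= B <= ceil(g/v), and A = g - B. *)

Lemma ceil_divE a d : 0 < d -> ceil_div a d = a %/ d + (0 < a %% d).
Proof. by move=> d_gt0; rewrite /ceil_div; case: (posnP (a %% d)) => /= ?; nia. Qed.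

Lemma divn_add_ceil_div d a n m : 0 < d -> a + n = m * d ->
  a %/ d + ceil_div n d = m.
Proof. by move=> d_gt0 def_m; rewrite ceil_divE //; case: (posnP (n %% d)) => /= ?; nia. Qed.

Lemma leq_ceil_div2r d m n : m <= n -> ceil_div m d <= ceil_div n d.
Proof. by move=> le_mn; rewrite leq_div2r // leq_add2r. Qed.

Lemma leq_exp2rW m n e : m <= n -> m ^ e <= n ^ e.
Proof. by move=> le_mn; elim: e => // e IHe; rewrite !expnS leq_mul. Qed.

Lemma divn_ceil_block G p D x : 0 < G -> 0 < p ->
  ceil_div (p * D) G <= x < ceil_div (p * D.+1) G -> G * x %/ p = D.
Proof. by rewrite /ceil_div => G_gt0 p_gt0 /andP[lo_x x_hi]; nia. Qed.

Lemma ceil_div_block_len G p q r a : 0 < G -> p = q * G + r -> r < G ->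
  q <= ceil_div (a + p) G - ceil_div a G <= q.+1.
Proof. by rewrite /ceil_div => G_gt0 def_p r_lt; nia. Qed.

Lemma eqn_modMl k m n d : coprime k d ->
  (k * m == k * n %[mod d]) = (m == n %[mod d]).
Proof.
move=> co_kd; wlog le_nm : m n / n <= m.
  move=> W; case: (leqP n m) => [|/ltnW le_mn]; first exact: W.
  by rewrite eq_sym W // eq_sym.
by rewrite !eqn_mod_dvd ?leq_mul2l ?le_nm ?orbT // -mulnBr Gauss_dvdr // coprime_sym.
Qed.

Lemma sum_nat_blocks (a : nat -> nat) (F : nat -> nat) n : {homo a : m k / m <= k} ->
  \sum_(a 0 <= x < a n) F x = \sum_(k < n) \sum_(a k <= x < a k.+1) F x.
Proof.
move=> a_homo; elim: n => [|n IHn]; first by rewrite big_geq // big_ord0.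
by rewrite big_ord_recr -IHn /= -big_cat_nat // a_homo.
Qed.

Lemma sum_weighted_bounds (I : Type) (r : seq I) (w N : I -> nat) lo hi :
  (forall i, lo <= N i <= hi) ->
  (\sum_(i <- r) w i) * lo <= \sum_(i <- r) w i * N i <= (\sum_(i <- r) w i) * hi.
Proof.
move=> N_bounds; rewrite !big_distrl /=; apply/andP; split; apply: leq_sum => i _;
  by apply: leq_mul => //; case/andP: (N_bounds i).
Qed.

Section CongruenceCount.

Variables (k c d : nat).
Hypotheses (d_gt0 : 0 < d) (co_kd : coprime k d).

Let sols lo n := \sum_(lo <= x < lo + n) (k * x == c %[mod d]).

Lemma cong_count_window lo : sols lo d = 1.
Proof.
rewrite /sols -{1}[lo]add0n big_addn addKn big_mkord.
pose f (i : 'I_d) : 'I_d := Ordinal (ltn_pmod (k * (i + lo)) d_gt0).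
have f_inj : injective f.
  move=> i j /(congr1 val) /eqP /=; rewrite eqn_modMl // eqn_modDr.
  by rewrite !(modn_small (ltn_ord _)) => /eqP /val_inj.
pose c' : 'I_d := Ordinal (ltn_pmod c d_gt0).
rewrite (eq_bigr (fun i => (f i == c') : nat)) //.
rewrite -(reindex_inj f_inj (P := xpredT) (F := fun j => (j == c') : nat)) /=.
by rewrite (bigD1 c') //= eqxx big1 // => i /negbTE ->.
Qed.

Lemma cong_count_blocks lo m : sols lo (m * d) = m.
Proof.
elim: m => [|m IHm]; first by rewrite /sols addn0 big_geq.
rewrite /sols mulSnr addnA (big_cat_nat _ (n := lo + m * d)) ?leq_addr //=.
by rewrite -/(sols lo (m * d)) IHm -/(sols _ d) cong_count_window addn1.
Qed.

Lemma cong_count_short lo s : s <= d -> sols lo s <= (0 < s).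
Proof.
case: (posnP s) => [-> _|s_gt0 le_sd]; first by rewrite /sols addn0 big_geq.
change (sols lo s <= 1); rewrite -(cong_count_window lo) /sols.
by rewrite (big_cat_nat _ (n := lo + s) (p := lo + d)) ?leq_addr ?leq_add2l.
Qed.

Lemma cong_count_bounds lo n : n %/ d <= sols lo n <= ceil_div n d.
Proof.
have -> : sols lo n = n %/ d + sols (lo + n %/ d * d) (n %% d).
  rewrite {1}/sols {1}(divn_eq n d) addnA.
  rewrite (big_cat_nat _ (n := lo + n %/ d * d)) ?leq_addr //=.
  by rewrite -/(sols lo _) cong_count_blocks.
by rewrite ceil_divE // leq_addr leq_add2l cong_count_short // ltnW // ltn_pmod.
Qed.

Lemma cong_count_compl_bounds lo n :
  (d.-1 * n) %/ d <= \sum_(lo <= x < lo + n) (k * x != c %[mod d])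
                  <= ceil_div (d.-1 * n) d.
Proof.
have sols_compl : sols lo n + \sum_(lo <= x < lo + n) (k * x != c %[mod d]) = n.
  rewrite /sols -big_split /= (eq_bigr (fun _ => 1)) => [|x _]; last by case: eqP.
  by rewrite sum_nat_const_nat addKn muln1.
have /andP[lo_sols hi_sols] := cong_count_bounds lo n.
have mulpredn : d.-1 * n + n = n * d by rewrite addnC -mulSn prednK // mulnC.
have := divn_add_ceil_div d_gt0 mulpredn.
have := divn_add_ceil_div d_gt0 (etrans (addnC _ _) mulpredn).
lia.
Qed.

End CongruenceCount.

Definition digit g k D := D %/ g ^ k %% g.

Lemma divn_expS_digit g k D : D %/ g ^ k = g * (D %/ g ^ k.+1) + digit g k D.
Proof. by rewrite /digit expnSr divnMA mulnC -divn_eq. Qed.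

Lemma sum_ord_mul (F : nat -> nat) m g :
  \sum_(D < m * g) F D = \sum_(D < m) \sum_(d < g) F (D * g + d).
Proof.
elim: m => [|m IHm]; first by rewrite mul0n !big_ord0.
rewrite big_ord_recr /= -IHm mulSnr -!(big_mkord xpredT).
rewrite (big_cat_nat _ (n := m * g)) ?leq_addr //=; congr (_ + _).
by rewrite -{1}[m * g]add0n big_addn addKn big_mkord; apply: eq_bigr => d; rewrite addnC.
Qed.

Lemma sum_prod_digits g n (F : nat -> nat -> nat) : 0 < g ->
  \sum_(D < g ^ n) \prod_(k < n) F k (digit g k D) =
  \prod_(k < n) \sum_(d < g) F k d.
Proof.
move=> g_gt0; elim: n F => [|n IHn] F; first by rewrite big_ord1 !big_ord0.
rewrite [RHS]big_ord_recl -(IHn (fun k => F k.+1)) big_distrr expnSr.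
rewrite (sum_ord_mul (fun D => \prod_(k < n.+1) F k (digit g k D))) /=.
apply: eq_bigr => D _; rewrite big_distrl /=; apply: eq_bigr => d _.
rewrite big_ord_recl /digit expn0 divn1 modnMDl modn_small //; congr (_ * _).
apply: eq_bigr => k _; rewrite lift0 /= expnS divnMA.
by rewrite divnMDl // (divn_small (ltn_ord d)) addn0.
Qed.

Definition interior_run n (s : nat -> bool) :=
  all (fun j => (0 < j < n) == s j) (iota 0 n.+1).

Lemma iota_rcons m n : iota m n.+1 = rcons (iota m n) (m + n).
Proof. by rewrite -cats1 -addn1 iotaD. Qed.

Lemma interior_runE n s :
  interior_run n.+1 s = [&& ~~ s 0, all s (iota 1 n) & ~~ s n.+1].
Proof.
rewrite /interior_run.
have -> : iota 0 n.+2 = 0 :: rcons (iota 1 n) n.+1 by rewrite iota_rcons.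
rewrite /= all_rcons ltnn /= !(eq_sym false) !eqbF_neg.
congr (_ && _); rewrite andbC; congr (_ && _); apply: eq_in_all => j.
by rewrite mem_iota add1n => /andP[-> ->].
Qed.

Lemma all_iota_steps n (s c : nat -> bool) :
  (forall j, s j -> s j.+1 = c j) -> s 1 -> all s (iota 1 n.+1) = all c (iota 1 n).
Proof.
move=> step s1; elim: n => [|n IHn]; first by rewrite /= s1.
rewrite iota_rcons [in RHS]iota_rcons !all_rcons IHn !add1n.
case: (boolP (all c (iota 1 n))) => [all_c|]; last by rewrite !andbF.
by rewrite !andbT step //; apply: (allP (etrans IHn all_c)); rewrite mem_iota; lia.
Qed.

Lemma interior_run_steps (s c : nat -> bool) n : 0 < n ->
  (forall j, s j -> s j.+1 = c j) -> (forall j, s j.+1 -> s j = c j) ->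
  interior_run n.+1 s = s 1 && interior_run n c.
Proof.
case: n => // n _ fwd bwd; rewrite !interior_runE.
case: (boolP (s 1)) => [s1|ns1]; last first.
  apply/negbTE; apply: contra ns1 => /and3P[_ /allP all_s _].
  by apply: all_s; rewrite mem_iota; lia.
have all_s := all_iota_steps n fwd s1.
rewrite (bwd 0 s1) all_s; case: (boolP (all c (iota 1 n))) => //= all_c.
by rewrite fwd //; apply: (allP (etrans all_s all_c)); rewrite mem_iota; lia.
Qed.

Lemma interior_run_rev n s : interior_run n (fun j => s (n - j)) = interior_run n s.
Proof.
suff rev_in t : interior_run n (fun j => t (n - j)) -> interior_run n t.
  apply/idP/idP => [|run_s]; first exact: rev_in.
  apply: rev_in; rewrite /interior_run (eq_in_all (a2 := fun j => (0 < j < n) == s j)) //.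
  by move=> j; rewrite mem_iota => j_le; rewrite /= subKn //; lia.
move=> /allP run_t; apply/allP => j; rewrite mem_iota => j_le.
have := run_t (n - j); rewrite mem_iota subKn; last by lia.
have -> : (0 < n - j < n) = (0 < j < n) by lia.
by apply; lia.
Qed.

Lemma nat_of_all_iota (f : pred nat) n : all f (iota 0 n) = \prod_(j < n) f j :> nat.
Proof.
rewrite -big_all (big_morph nat_of_bool (fun a b => esym (mulnb a b)) erefl).
by rewrite -{1}(subn0 n) big_mkord.
Qed.

Lemma sum_interior_run_digits g t (c : pred nat) : 0 < g -> 0 < t ->
  \sum_(D < g ^ t.+1) interior_run t (fun k => c (digit g k D)) =
  (\sum_(d < g) ~~ c d) ^ 2 * (\sum_(d < g) c d) ^ t.-1.
Proof.
move=> g_gt0; case: t => // n _.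
under eq_bigr => D _ do rewrite nat_of_all_iota.
rewrite (sum_prod_digits _ (fun k d => (0 < k < n.+1) == c d)) //.
rewrite big_ord_recl big_ord_recr /= ltnn.
have -> : \sum_(d < g) (false == c d) = \sum_(d < g) ~~ c d.
  by apply: eq_bigr => d _; case: (c d).
rewrite (eq_bigr (fun _ => \sum_(d < g) c d)) => [|i _]; last first.
  by apply: eq_bigr => d _; rewrite /bump /= add1n ltnS ltn_ord; case: (c d).
by rewrite prod_nat_const card_ord mulnA mulnAC.
Qed.

Definition preserves_residue p g v b d := g * b == b + p * d %[mod v].

Definition orbit_in_class p g v b x j := g ^ j * x %% p == b %[mod v].

(* The j-th digit after the point of the base-g expansion of x / p. *)
Definition frac_digit p g x j := g * (g ^ j * x %% p) %/ p.

Lemma orbit_step p g x j :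
  g * (g ^ j * x %% p) = p * frac_digit p g x j + g ^ j.+1 * x %% p.
Proof. by rewrite {1}(divn_eq (g * _) p) mulnC modnMmr mulnA -expnS. Qed.

Lemma residue_step_fwd p g v b y d y' : g * y = p * d + y' -> y == b %[mod v] ->
  (y' == b %[mod v]) = preserves_residue p g v b d.
Proof.
move=> step /eqP y_b; rewrite -(eqn_modDl (p * d)) -step addnC.
by have -> : g * y = g * b %[mod v] by rewrite -modnMmr y_b modnMmr.
Qed.

Lemma residue_step_bwd p g v b y d y' : coprime g v -> g * y = p * d + y' ->
  y' == b %[mod v] -> (y == b %[mod v]) = preserves_residue p g v b d.
Proof.
move=> co_gv step /eqP y'_b; rewrite -(eqn_modMl _ _ co_gv) step.
by rewrite -modnDmr y'_b modnDmr addnC eq_sym.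
Qed.

Lemma divn_expn_mul p g x j n : 0 < g -> j <= n ->
  g ^ j * x %/ p = g ^ n * x %/ p %/ g ^ (n - j).
Proof.
move=> g_gt0 le_jn; rewrite -divnMA -{1}(subnK le_jn) expnD -mulnA [p * _]mulnC.
by rewrite divnMl // expn_gt0 g_gt0.
Qed.

Lemma frac_digitE p g x n j : 0 < g -> j < n ->
  frac_digit p g x j = digit g (n - j.+1) (g ^ n * x %/ p).
Proof.
move=> g_gt0 lt_jn; set E := g ^ n * x %/ p.
have expS_div : g ^ j.+1 * x %/ p = g * (g ^ j * x %/ p) + frac_digit p g x j.
  case: (posnP p) => [->|p_gt0]; first by rewrite /frac_digit !divn0 muln0.
  by rewrite expnS -mulnA {1}(divn_eq (g ^ j * x) p) mulnDr mulnA divnMDl.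
have quot k : k <= n -> g ^ k * x %/ p = E %/ g ^ (n - k) by exact: divn_expn_mul.
apply/eqP; rewrite -(eqn_add2l (g * (g ^ j * x %/ p))) -expS_div.
rewrite (quot j.+1 lt_jn) (quot j (ltnW lt_jn)) -(subnSK lt_jn).
by rewrite (divn_expS_digit g (n - j.+1) E).
Qed.

Lemma orbit_run_digits p g v b t x : 0 < g -> 0 < t -> coprime g v ->
  interior_run t.+1 (orbit_in_class p g v b x) =
  (g * x == b + p * (g ^ t.+1 * x %/ p %/ g ^ t) %[mod v]) &&
  interior_run t (fun k => preserves_residue p g v b (digit g k (g ^ t.+1 * x %/ p))).
Proof.
move=> g_gt0 t_gt0 co_gv.
rewrite (interior_run_steps (c := fun j => preserves_residue p g v b (frac_digit p g x j)))
  //; last 2 first.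
- by move=> j; apply: residue_step_fwd; exact: orbit_step.
- by move=> j; apply: residue_step_bwd => //; exact: orbit_step.
congr andb.
  have quot1 : g * x %/ p = g ^ t.+1 * x %/ p %/ g ^ t.
    by rewrite -{1}[g]expn1 (divn_expn_mul p x g_gt0 (ltn0Sn t)) subn1.
  rewrite /orbit_in_class expn1 -quot1 {2}(divn_eq (g * x) p).
  by rewrite [_ %/ p * p]mulnC [p * _ + _]addnC eqn_modDr.
rewrite -[RHS]interior_run_rev; apply: eq_in_all => j; rewrite mem_iota ltnS => /andP[_ le_jt].
by rewrite /= (frac_digitE p x g_gt0 (le_jt : j < t.+1)).
Qed.

Lemma primitive_root_expn_inj p g : primitive_root_mod p g ->
  {in [pred i | 0 < i < p] &, injective (fun i => g ^ i %% p)}.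
Proof.
move=> [co_gp g_ord] i j; rewrite !inE; wlog lt_ij : i j / i < j.
  move=> W i_range j_range e; case: (ltngtP i j) => [lt_ij|lt_ji|//]; first exact: W.
  exact/esym/(W j i).
move=> /andP[i_gt0 _] /andP[_ j_lt] /eqP e; exfalso.
have : g ^ i * 1 == g ^ i * g ^ (j - i) %[mod p] by rewrite muln1 -expnD subnKC // ltnW.
rewrite eqn_modMl ?coprimeXl // (modn_small (_ : 1 < p)) 1?eq_sym; last by lia.
by apply/negP/g_ord; lia.
Qed.

Lemma card_primitive_root_reindex p g (P : pred nat) :
  prime p -> primitive_root_mod p g ->
  #|[set i : 'I_p | (0 < i) && P (g ^ i %% p)]| = #|[set x : 'I_p | (0 < x) && P x]|.
Proof.
move=> p_prime g_prim; have p_gt0 := prime_gt0 p_prime.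
pose f (i : 'I_p) : 'I_p := Ordinal (ltn_pmod (g ^ i) p_gt0).
pose A := [set i : 'I_p | 0 < i].
have f_gt0 i : 0 < f i.
  rewrite lt0n /= -/(p %| g ^ i) -prime_coprime // coprimeXr // coprime_sym.
  exact: g_prim.1.
have f_inj : {in A &, injective f}.
  move=> i j; rewrite !inE => i_gt0 j_gt0 /(congr1 val) /= e; apply: ord_inj.
  by apply: (primitive_root_expn_inj g_prim) e; rewrite inE ?i_gt0 ?j_gt0 /=.
have fA : f @: A = A.
  apply/eqP; rewrite eqEcard card_in_imset // leqnn andbT.
  by apply/subsetP => _ /imsetP[i _ ->]; rewrite inE f_gt0.
rewrite -(card_in_imset (f := f)) => [|i j]; last first.
  by rewrite !inE => /andP[i_gt0 _] /andP[j_gt0 _]; apply: f_inj; rewrite inE.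
apply: eq_card => x; rewrite [in RHS]inE; apply/imsetP/idP => [[i]|/andP[x_gt0 Px]].
  by rewrite inE => /andP[_ Pi] ->; rewrite f_gt0.
have : x \in f @: A by rewrite fA inE.
case/imsetP => i; rewrite inE => i_gt0 def_x; exists i => //.
by rewrite inE i_gt0 -[g ^ i %% p]/(val (f i)) -def_x.
Qed.

Lemma forall_ord_iota n (s : pred nat) :
  [forall j : 'I_n.+1, (0 < j) ==> s j] = all s (iota 1 n).
Proof.
apply/forallP/allP => [s_pos j|s_iota j]; last first.
  by apply/implyP => j_gt0; apply: s_iota; rewrite mem_iota j_gt0 add1n /=.
by rewrite mem_iota add1n => /andP[j_gt0 j_lt]; move: (s_pos (Ordinal j_lt)); rewrite /= j_gt0.
Qed.

Lemma orbit_in_class_expn p g v b i j : b < v ->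
  orbit_in_class p g v b (g ^ i %% p) j = (g ^ (i + j) %% p %% v == b).
Proof. by move=> b_lt; rewrite /orbit_in_class modnMmr -expnD addnC (modn_small b_lt). Qed.

Lemma rho_orbit_count p g v b t : prime p -> primitive_root_mod p g -> 0 < t -> b < v ->
  rho p g v b t = \sum_(0 <= x < p) interior_run t.+1 (orbit_in_class p g v b x).
Proof.
move=> p_prime g_prim t_gt0 b_lt.
pose run x := interior_run t.+1 (orbit_in_class p g v b x).
have -> : rho p g v b t = #|[set i : 'I_p | (0 < i) && run (g ^ i %% p)]|.
  apply: eq_card => i; have s_expn j := orbit_in_class_expn p g i j b_lt.
  rewrite !inE /run interior_runE (eq_all s_expn) !s_expn -forall_ord_iota addn0 -addnA addn1.
  by rewrite -!andbA [X in _ && (_ && X)]andbC.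
have run0 : run 0 = false.
  rewrite /run interior_runE /orbit_in_class -(prednK t_gt0) /= !muln0.
  by case: (0 %% p == b %[mod v]).
rewrite card_primitive_root_reindex // -sum1_card big_mkcond big_mkord /=.
apply: eq_bigr => -[[|x] x_lt] _; rewrite inE /=; first by rewrite -/(run 0) run0.
by rewrite /run; case: (interior_run _ _).
Qed.

Lemma preserves_residue_count p g v b : prime p -> 0 < v < p -> 0 < g ->
  g %/ v <= \sum_(d < g) preserves_residue p g v b d <= ceil_div g v /\
  (v.-1 * g) %/ v <= \sum_(d < g) ~~ preserves_residue p g v b d <= ceil_div (v.-1 * g) v.
Proof.
move=> p_prime /andP[v_gt0 v_lt] g_gt0.
have co_pv : coprime p v by rewrite prime_coprime // gtnNdvd.
have presE d : preserves_residue p g v b d = (p * d == g.-1 * b %[mod v]).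
  by rewrite /preserves_residue -{1}(prednK g_gt0) mulSn eqn_modDl eq_sym.
have := cong_count_bounds (g.-1 * b) v_gt0 co_pv 0 g.
have := cong_count_compl_bounds (g.-1 * b) v_gt0 co_pv 0 g.
rewrite !add0n !big_mkord => compl_bounds bounds.
by split; under eq_bigr => d _ do rewrite presE.
Qed.

Section BlockDecomposition.

Variables (p g v b t : nat).
Hypotheses (p_prime : prime p) (g_prim : primitive_root_mod p g) (co_gv : coprime g v).
Hypotheses (g_gt0 : 0 < g) (t_gt0 : 0 < t) (b_lt : b < v).

Let G := g ^ t.+1.
(* The x with G x / p = D are those in [block_start D, block_start D.+1). *)
Let block_start D := ceil_div (p * D) G.
Let weight D := interior_run t (fun k => preserves_residue p g v b (digit g k D)).
Let block_count D :=
  \sum_(block_start D <= x < block_start D.+1) (g * x == b + p * (D %/ g ^ t) %[mod v]).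

Let pass_count := \sum_(d < g) preserves_residue p g v b d.
Let fail_count := \sum_(d < g) ~~ preserves_residue p g v b d.

Let G_gt0 : 0 < G. Proof. by rewrite expn_gt0 g_gt0. Qed.

Lemma rho_block_sum : rho p g v b t = \sum_(D < G) weight D * block_count D.
Proof.
have p_gt0 := prime_gt0 p_prime.
have start0 : block_start 0 = 0 by rewrite /block_start /ceil_div muln0 add0n divn_small // prednK.
have startG : block_start G = p.
  by rewrite /block_start /ceil_div divnMDl // divn_small ?addn0 // prednK.
rewrite rho_orbit_count // -[X in \sum_(X <= _ < _) _]start0 -[X in \sum_(_ <= _ < X) _]startG.
rewrite (sum_nat_blocks (a := block_start)) => [|m n le_mn]; last first.
  by rewrite leq_ceil_div2r // leq_mul2l le_mn orbT.
apply: eq_bigr => D _; rewrite big_distrr; apply: eq_big_nat => x x_in /=.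
by rewrite orbit_run_digits // -/G (divn_ceil_block G_gt0 p_gt0 x_in) andbC mulnb.
Qed.

Lemma block_count_bounds q r D : p = q * G + r -> r < G ->
  q %/ v <= block_count D <= ceil_div q.+1 v.
Proof.
move=> def_p r_lt; have v_gt0 : 0 < v by apply: leq_ltn_trans b_lt.
have := ceil_div_block_len (p * D) G_gt0 def_p r_lt.
rewrite -mulnSr -/(block_start D) -/(block_start D.+1) => /andP[len_lo len_hi].
have le_start : block_start D <= block_start D.+1.
  by rewrite leq_ceil_div2r // leq_mul2l leqnSn orbT.
have := cong_count_bounds (b + p * (D %/ g ^ t)) v_gt0 co_gv (block_start D)
  (block_start D.+1 - block_start D).
rewrite subnKC // -/(block_count D) => /andP[count_lo count_hi].
apply/andP; split; first exact: leq_trans (leq_div2r v len_lo) count_lo.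
exact: leq_trans count_hi (leq_ceil_div2r v len_hi).
Qed.

Lemma rho_bounds q r : p = q * G + r -> r < G ->
  fail_count ^ 2 * pass_count ^ t.-1 * (q %/ v) <= rho p g v b t <=
  fail_count ^ 2 * pass_count ^ t.-1 * ceil_div q.+1 v.
Proof.
move=> def_p r_lt; rewrite rho_block_sum -sum_interior_run_digits //.
exact: (sum_weighted_bounds (index_enum 'I_G) (fun D : 'I_G => weight D : nat)
  (fun D : 'I_G => block_count_bounds D def_p r_lt)).
Qed.

End BlockDecomposition.

Theorem theorem10 (p v g t b q r : nat) :
  prime p -> odd p ->
  1 < v -> v < p.-1 ->
  2 <= g <= p.-1 -> primitive_root_mod p g -> coprime g v ->
  1 <= t -> b < v ->
  p = q * g ^ t.+1 + r -> r < g ^ t.+1 ->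
  (g %/ v) ^ t.-1 * ((v.-1 * g) %/ v) ^ 2 * (q %/ v) <= rho p g v b t /\
  rho p g v b t <=
    (ceil_div g v) ^ t.-1 * (ceil_div (v.-1 * g) v) ^ 2 * ceil_div q.+1 v.
Proof.
move=> p_prime _ v_gt1 v_lt /andP[g_ge2 _] g_prim co_gv t_gt0 b_lt def_p r_lt.
have g_gt0 : 0 < g by apply: ltnW.
have v_range : 0 < v < p by apply/andP; split; lia.
have [/andP[B_lo B_hi] /andP[A_lo A_hi]] := preserves_residue_count b p_prime v_range g_gt0.
have /andP[rho_lo rho_hi] := rho_bounds p_prime g_prim co_gv g_gt0 t_gt0 b_lt def_p r_lt.
split; [apply: leq_trans rho_lo | apply: leq_trans rho_hi _]; rewrite [_ ^ 2 * _]mulnC;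
  by apply: leq_mul => //; apply: leq_mul; apply: leq_exp2rW.
Qed.
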